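(* Let $K=[x_1,x_2]\times[y_1,y_2]\in T_h$, $h_x=x_2-x_1$, $h_y=y_2-y_1$. For $w,v\in U_h$, $$\int_{\partial K}n\cdot(A^c\nabla w)(\Pi_h^*v-v)\,ds=\frac{h_y^3h_x}{24}a^c_{11}v_{xy}w_{xy}+\frac{h_yh_x^3}{24}a^c_{22}v_{xy}w_{xy},$$ where $n$ is the outward unit normal of $K$, and $w_{xy},v_{xy}$ are the (constant) mixed derivatives of $w|_K$, $v|_K$.
   Context: $\Omega\subset\mathbb{R}^2$ is an open rectangle, $T_h$ a conforming partition of $\overline\Omega$ into closed rectangles with sides parallel to the axes, $N_h$ its set of nodes. $A=(a_{ij})_{2\times2}\in[W^{1,\infty}(\Omega)]^{2\times2}$, and $A^c=(a^c_{ij})$ is its piecewise constant approximation: $A^c|_K=\frac{1}{|K|}\int_KA$. The dual partition $T_h^*$ is obtained by connecting the center of each element to the midpoints of its edges; the control volume $K_P^*$ of a node $P$ is the union of the resulting sub-rectangles having $P$ as a vertex. $U_h=\{v\in C^0(\overline\Omega): v|_K\in Q_1(K)\ \forall K,\ v|_{\partial\Omega}=0\}$ ($Q_1$ = bilinear polynomials). $\Pi_h^*v=\sum_{P\in N_h}v(P)\chi_P$, $\chi_P$ the characteristic function of $K_P^*$. *)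

From Stdlib Require Import Reals.
From Coquelicot Require Import Coquelicot.
Open Scope R_scope.

Definition q1 (a b c d : R) (x y : R) : R := a + b * x + c * y + d * x * y.

Definition dx (f : R -> R -> R) (x y : R) : R := Derive (fun t => f t y) x.
Definition dy (f : R -> R -> R) (x y : R) : R := Derive (fun t => f x t) y.
Definition dxy (f : R -> R -> R) (x y : R) : R := Derive (fun t => dx f x t) y.

Definition avgK (x1 x2 y1 y2 : R) (a : R -> R -> R) : R :=
  RInt (fun x => RInt (fun y => a x y) y1 y2) x1 x2 / ((x2 - x1) * (y2 - y1)).

(* Restriction to K of Pi_h^* v: on K, the dual partition consists of the four
   quarter rectangles of K, and the quarter containing the vertex P carries the
   value v(P).  (On the dividing lines through the centre -- a null set for the
   boundary integral -- we arbitrarily assign the upper/right vertex.) *)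
Definition PiK (x1 x2 y1 y2 : R) (v : R -> R -> R) (x y : R) : R :=
  v (if Rlt_dec x ((x1 + x2) / 2) then x1 else x2)
    (if Rlt_dec y ((y1 + y2) / 2) then y1 else y2).

(* \int_{\partial K} n . F  phi ds for K = [x1,x2] x [y1,y2], F = (F1,F2),
   n the outward unit normal:  bottom (n = (0,-1)), top (n = (0,1)),
   left (n = (-1,0)), right (n = (1,0)). *)
Definition bdry_flux (x1 x2 y1 y2 : R) (F1 F2 phi : R -> R -> R) : R :=
    RInt (fun x => - F2 x y1 * phi x y1) x1 x2
  + RInt (fun x =>   F2 x y2 * phi x y2) x1 x2
  + RInt (fun y => - F1 x1 y * phi x1 y) y1 y2
  + RInt (fun y =>   F1 x2 y * phi x2 y) y1 y2.

(* Lipschitz continuity and boundedness on the open rectangle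
   Omega = (X1,X2) x (Y1,Y2): the characterization of W^{1,infty}(Omega)
   on a convex domain (up to choosing the Lipschitz representative). *)
Definition in_Omega (X1 X2 Y1 Y2 : R) (x y : R) : Prop :=
  X1 < x < X2 /\ Y1 < y < Y2.
Definition W1inf (X1 X2 Y1 Y2 : R) (a : R -> R -> R) : Prop :=
  exists M L : R,
    (forall x y, in_Omega X1 X2 Y1 Y2 x y -> Rabs (a x y) <= M) /\
    (forall x y x' y', in_Omega X1 X2 Y1 Y2 x y -> in_Omega X1 X2 Y1 Y2 x' y' ->
        Rabs (a x y - a x' y') <= L * sqrt ((x - x')^2 + (y - y')^2)).

(* On each edge of K the flux n.(A^c grad w) is affine along the edge, and since
   the Q1 function v is affine along the edge too, Pi_h^* v - v there equals
   the tangential derivative of v times the sawtooth e(t) - t, where e(t) is the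
   endpoint of the edge nearest to t.  The sawtooth has zero mean and first
   moment h^3/24, so only the linear part of the flux survives, and that part is
   a^c_11 w_xy (vertical edges) or a^c_22 w_xy (horizontal edges); the
   contributions of opposite edges add up. *)

From Stdlib Require Import Reals Lra.
From Coquelicot Require Import Coquelicot.
Open Scope R_scope.

Lemma RInt_ext_open (f g : R -> R) (a b : R) : a < b ->
  (forall t, a < t < b -> f t = g t) -> RInt f a b = RInt g a b.
Proof.
  intros hab hfg; apply RInt_ext; intros t.
  rewrite Rmin_left, Rmax_right by lra; exact (hfg t).
Qed.

Lemma ex_RInt_ext_open (f g : R -> R) (a b : R) : a < b ->
  (forall t, a < t < b -> f t = g t) -> ex_RInt g a b -> ex_RInt f a b.
Proof.
  intros hab hfg; apply ex_RInt_ext; intros t.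
  rewrite Rmin_left, Rmax_right by lra; intros Ht; symmetry; exact (hfg t Ht).
Qed.

Lemma RInt_poly2 (A B C a b : R) :
  RInt (fun t => A + B * t + C * t ^ 2) a b =
  (A * b + B * b ^ 2 / 2 + C * b ^ 3 / 3) - (A * a + B * a ^ 2 / 2 + C * a ^ 3 / 3).
Proof.
  apply is_RInt_unique, (is_RInt_derive (fun t => A * t + B * t ^ 2 / 2 + C * t ^ 3 / 3)).
  - intros t _; auto_derive; [easy | field].
  - intros t _; apply (ex_derive_continuous (K := R_AbsRing) (V := R_NormedModule)).
    auto_derive; easy.
Qed.

Lemma ex_RInt_poly2 (A B C a b : R) : ex_RInt (fun t => A + B * t + C * t ^ 2) a b.
Proof.
  apply (ex_RInt_continuous (V := R_CompleteNormedModule)); intros t _.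
  apply (ex_derive_continuous (K := R_AbsRing) (V := R_NormedModule)).
  auto_derive; easy.
Qed.

(* The one-dimensional trace of Pi_h^*: the value at t is taken from the nearer endpoint. *)
Definition nearest_end (a b t : R) : R := if Rlt_dec t ((a + b) / 2) then a else b.

Lemma nearest_end_left (a b : R) : a < b -> nearest_end a b a = a.
Proof. intros hab; unfold nearest_end; destruct Rlt_dec; lra. Qed.

Lemma nearest_end_right (a b : R) : a < b -> nearest_end a b b = b.
Proof. intros hab; unfold nearest_end; destruct Rlt_dec; lra. Qed.

Lemma nearest_end_bounds (a b t : R) : a <= b -> a <= nearest_end a b t <= b.
Proof. intros hab; unfold nearest_end; destruct Rlt_dec; lra. Qed.

Lemma RInt_affine_mul_nearest_end_sub (f : R -> R) (a b p q k : R) : a < b ->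
  (forall t, a < t < b -> f t = (p + q * t) * (k * (nearest_end a b t - t))) ->
  RInt f a b = q * k * (b - a) ^ 3 / 24.
Proof.
  intros hab hf; set (m := (a + b) / 2).
  assert (ham : a < m) by (unfold m; lra).
  assert (hmb : m < b) by (unfold m; lra).
  assert (f_left : forall t, a < t < m ->
            f t = p * k * a + (q * k * a - p * k) * t + - (q * k) * t ^ 2).
  { intros t Ht; rewrite hf by lra; unfold nearest_end; fold m.
    destruct Rlt_dec; [ring | lra]. }
  assert (f_right : forall t, m < t < b ->
            f t = p * k * b + (q * k * b - p * k) * t + - (q * k) * t ^ 2).
  { intros t Ht; rewrite hf by lra; unfold nearest_end; fold m.
    destruct Rlt_dec; [lra | ring]. }
  rewrite <- (RInt_Chasles f a m b)
    by (apply (ex_RInt_ext_open _ _ _ _ ham f_left) || apply (ex_RInt_ext_open _ _ _ _ hmb f_right);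
        apply ex_RInt_poly2).
  rewrite (RInt_ext_open _ _ _ _ ham f_left), (RInt_ext_open _ _ _ _ hmb f_right).
  rewrite !RInt_poly2; unfold plus; simpl; unfold m; field.
Qed.

Lemma dx_q1 (a b c d x y : R) : dx (q1 a b c d) x y = b + d * y.
Proof. unfold dx, q1; apply is_derive_unique; auto_derive; [easy | ring]. Qed.

Lemma dy_q1 (a b c d x y : R) : dy (q1 a b c d) x y = c + d * x.
Proof. unfold dy, q1; apply is_derive_unique; auto_derive; [easy | ring]. Qed.

Lemma dxy_q1 (a b c d x y : R) : dxy (q1 a b c d) x y = d.
Proof.
  unfold dxy; rewrite (Derive_ext _ (fun t => b + d * t)) by (intros; apply dx_q1).
  apply is_derive_unique; auto_derive; [easy | ring].
Qed.

Section NodalErrorOnEdges.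

Variables (x1 x2 y1 y2 a b c d : R) (v : R -> R -> R).
Hypothesis v_on_K : forall x y, x1 <= x <= x2 -> y1 <= y <= y2 -> v x y = q1 a b c d x y.

Lemma PiK_sub_horizontal_edge (x y : R) :
  x1 <= x <= x2 -> y1 <= y <= y2 -> nearest_end y1 y2 y = y ->
  PiK x1 x2 y1 y2 v x y - v x y = (b + d * y) * (nearest_end x1 x2 x - x).
Proof.
  intros Hx Hy Hend; change (PiK x1 x2 y1 y2 v x y)
    with (v (nearest_end x1 x2 x) (nearest_end y1 y2 y)).
  rewrite Hend, !v_on_K by (try apply nearest_end_bounds; lra).
  unfold q1; ring.
Qed.

Lemma PiK_sub_vertical_edge (x y : R) :
  x1 <= x <= x2 -> y1 <= y <= y2 -> nearest_end x1 x2 x = x ->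
  PiK x1 x2 y1 y2 v x y - v x y = (c + d * x) * (nearest_end y1 y2 y - y).
Proof.
  intros Hx Hy Hend; change (PiK x1 x2 y1 y2 v x y)
    with (v (nearest_end x1 x2 x) (nearest_end y1 y2 y)).
  rewrite Hend, !v_on_K by (try apply nearest_end_bounds; lra).
  unfold q1; ring.
Qed.

End NodalErrorOnEdges.

Theorem lemma4p2
  (X1 X2 Y1 Y2 : R) (a11 a12 a21 a22 : R -> R -> R)
  (x1 x2 y1 y2 : R) (w v : R -> R -> R)
  (aw bw cw dw av bv cv dv : R) :
  X1 < X2 -> Y1 < Y2 ->
  W1inf X1 X2 Y1 Y2 a11 -> W1inf X1 X2 Y1 Y2 a12 ->
  W1inf X1 X2 Y1 Y2 a21 -> W1inf X1 X2 Y1 Y2 a22 ->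
  X1 <= x1 -> x1 < x2 -> x2 <= X2 -> Y1 <= y1 -> y1 < y2 -> y2 <= Y2 ->
  (forall x y, x1 <= x <= x2 -> y1 <= y <= y2 -> w x y = q1 aw bw cw dw x y) ->
  (forall x y, x1 <= x <= x2 -> y1 <= y <= y2 -> v x y = q1 av bv cv dv x y) ->
  let wK := q1 aw bw cw dw in
  let vK := q1 av bv cv dv in
  let c11 := avgK x1 x2 y1 y2 a11 in
  let c12 := avgK x1 x2 y1 y2 a12 in
  let c21 := avgK x1 x2 y1 y2 a21 in
  let c22 := avgK x1 x2 y1 y2 a22 in
  let hx := x2 - x1 in
  let hy := y2 - y1 in
  let xc := (x1 + x2) / 2 in
  let yc := (y1 + y2) / 2 in
  bdry_flux x1 x2 y1 y2
    (fun x y => c11 * dx wK x y + c12 * dy wK x y)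
    (fun x y => c21 * dx wK x y + c22 * dy wK x y)
    (fun x y => PiK x1 x2 y1 y2 v x y - v x y)
  = hy ^ 3 * hx / 24 * c11 * dxy vK xc yc * dxy wK xc yc
  + hy * hx ^ 3 / 24 * c22 * dxy vK xc yc * dxy wK xc yc.
Proof.
  intros _ _ _ _ _ _ _ hx12 _ _ hy12 _ _ v_on_K; cbv zeta.
  set (c11 := avgK x1 x2 y1 y2 a11); set (c12 := avgK x1 x2 y1 y2 a12).
  set (c21 := avgK x1 x2 y1 y2 a21); set (c22 := avgK x1 x2 y1 y2 a22).
  pose proof (PiK_sub_horizontal_edge _ _ _ _ _ _ _ _ _ v_on_K) as horizontal.
  pose proof (PiK_sub_vertical_edge _ _ _ _ _ _ _ _ _ v_on_K) as vertical.
  pose proof (nearest_end_left _ _ hx12); pose proof (nearest_end_right _ _ hx12).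
  pose proof (nearest_end_left _ _ hy12); pose proof (nearest_end_right _ _ hy12).
  unfold bdry_flux.
  rewrite (RInt_affine_mul_nearest_end_sub _ x1 x2
             (- (c21 * (bw + dw * y1) + c22 * cw)) (- (c22 * dw)) (bv + dv * y1)),
          (RInt_affine_mul_nearest_end_sub _ x1 x2
             (c21 * (bw + dw * y2) + c22 * cw) (c22 * dw) (bv + dv * y2)),
          (RInt_affine_mul_nearest_end_sub _ y1 y2
             (- (c11 * bw + c12 * (cw + dw * x1))) (- (c11 * dw)) (cv + dv * x1)),
          (RInt_affine_mul_nearest_end_sub _ y1 y2
             (c11 * bw + c12 * (cw + dw * x2)) (c11 * dw) (cv + dv * x2)).
  - rewrite !dxy_q1; field.
  all: try assumption.
  all: intros t Ht; rewrite ?horizontal, ?vertical, ?dx_q1, ?dy_q1 by lra; ring.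
Qed.
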